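(* Let $L\subseteq\mathbb{R}^n$ be a cocompact lattice and $O\subseteq\mathbb{R}^n$ a nonempty open subset such that $v_1+v_2\in O$ for all $v_1,v_2\in O$. Then $O\cap L\neq\emptyset$. *)

From Stdlib Require Import Reals.
From Stdlib Require Fin.
Open Scope R_scope.

Definition vec (n : nat) : Type := Fin.t n -> R.

Definition vzero {n : nat} : vec n := fun _ => 0.
Definition vadd {n : nat} (x y : vec n) : vec n := fun i => x i + y i.
Definition vsub {n : nat} (x y : vec n) : vec n := fun i => x i - y i.

(* Open subsets of R^n (product topology = sup-norm topology). *)
Definition is_open {n : nat} (O : vec n -> Prop) : Prop :=
  forall x, O x -> exists e, 0 < e /\
    forall y : vec n, (forall i, Rabs (y i - x i) < e) -> O y.

Definition is_subgroup {n : nat} (L : vec n -> Prop) : Prop :=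
  L vzero /\ forall x y, L x -> L y -> L (vsub x y).

Definition is_discrete {n : nat} (L : vec n -> Prop) : Prop :=
  forall l, L l -> exists e, 0 < e /\
    forall x, L x -> (forall i, Rabs (x i - l i) < e) -> x = l.

(* R^n / L is compact: there is a compact set K (here a closed sup-norm ball
   of radius M, which is compact by Heine-Borel) with K + L = R^n. *)
Definition is_cocompact {n : nat} (L : vec n -> Prop) : Prop :=
  exists M : R, forall x : vec n, exists l, L l /\
    forall i, Rabs (x i - l i) <= M.

Definition cocompact_lattice {n : nat} (L : vec n -> Prop) : Prop :=
  is_subgroup L /\ is_discrete L /\ is_cocompact L.

From Stdlib Require Import Reals Lra FunctionalExtensionality.
From Stdlib Require Fin.
Open Scope R_scope.

(* O contains a sup-norm ball B(x, e), hence, being closed under addition,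
   every dilate k B(x, e) = B(k x, k e) with k >= 1.  Once k e exceeds the
   covering radius M of L, the ball B(k x, k e) contains a lattice point. *)

Definition vscale {n : nat} (c : R) (x : vec n) : vec n := fun i => c * x i.

Lemma add_closed_vscale_S {n : nat} (O : vec n -> Prop) :
  (forall v1 v2, O v1 -> O v2 -> O (vadd v1 v2)) ->
  forall (z : vec n) (k : nat), O z -> O (vscale (INR (S k)) z).
Proof.
  intros Hadd z k Hz; induction k as [|k IH].
  - replace (vscale (INR 1) z) with z; [exact Hz|].
    apply functional_extensionality; intro i; unfold vscale; simpl; ring.
  - replace (vscale (INR (S (S k))) z) with (vadd (vscale (INR (S k)) z) z).
    + now apply Hadd.
    + apply functional_extensionality; intro i; unfold vadd, vscale.
      rewrite (S_INR (S k)); ring.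
Qed.

Lemma exists_INR_S_mult_gt (M e : R) :
  0 < e -> exists k : nat, M < INR (S k) * e.
Proof.
  intros He; destruct (INR_unbounded (M / e)) as [k Hk]; exists k.
  rewrite S_INR.
  assert (M / e * e = M) by (field; lra).
  assert (M / e * e < INR k * e) by (apply Rmult_lt_compat_r; lra).
  lra.
Qed.

Lemma dist_vscale_inv (c a b : R) :
  0 < c -> Rabs (/ c * a - b) = Rabs (c * b - a) / c.
Proof.
  intros Hc.
  replace (/ c * a - b) with (- (c * b - a) / c) by (field; lra).
  unfold Rdiv; rewrite Rabs_mult, Rabs_Ropp, Rabs_inv, (Rabs_right c); lra.
Qed.

Lemma vscale_inv_ball {n : nat} (c e M : R) (x l : vec n) :
  0 < c -> M < c * e -> (forall i, Rabs (c * x i - l i) <= M) ->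
  forall i, Rabs (vscale (/ c) l i - x i) < e.
Proof.
  intros Hc HMe Hl i; unfold vscale; rewrite dist_vscale_inv by exact Hc.
  apply Rmult_lt_reg_r with c; [exact Hc|].
  unfold Rdiv; rewrite Rmult_assoc, Rinv_l by lra.
  specialize (Hl i); lra.
Qed.

Theorem mainTheorem13 (n : nat) (L O : vec n -> Prop) :
  cocompact_lattice L ->
  is_open O ->
  (exists x, O x) ->
  (forall v1 v2, O v1 -> O v2 -> O (vadd v1 v2)) ->
  exists v, O v /\ L v.
Proof.
  intros [_ [_ [M HM]]] Hopen [x Hx] Hadd.
  destruct (Hopen x Hx) as [e [He Hball]].
  destruct (exists_INR_S_mult_gt M e He) as [k Hk].
  set (c := INR (S k)).
  assert (Hc : 0 < c) by apply lt_0_INR, Nat.lt_0_succ.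
  destruct (HM (vscale c x)) as [l [Hl Hlx]].
  exists l; split; [|exact Hl].
  assert (Hz : O (vscale (/ c) l))
    by exact (Hball _ (vscale_inv_ball c e M x l Hc Hk Hlx)).
  replace l with (vscale c (vscale (/ c) l)).
  - exact (add_closed_vscale_S O Hadd _ k Hz).
  - apply functional_extensionality; intro i; unfold vscale; field; lra.
Qed.
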